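(* Let $X$ be a spectral space whose specialization order is total, and let $Y\subseteq X$. Then: (1) $\mathrm{Cl}^\mathrm{cons}(Y)=Y_\infty\cup Y_{(\infty)}$; (2) $Y$ is closed in the constructible topology if and only if the supremum and the infimum of every nonempty subset of $Y$ belong to $Y$.
   Context: A spectral space is a topological space homeomorphic to the prime spectrum of a commutative ring with the Zariski topology. The specialization order is $x\leq y$ iff $y\in\mathrm{Cl}(\{x\})$; suprema and infima refer to it. The constructible topology is the coarsest topology in which all open quasi-compact subsets of $X$ are clopen; $\mathrm{Cl}^\mathrm{cons}$ is closure in it. $Y_\infty$ (resp. $Y_{(\infty)}$) is the set of suprema (resp. infima) in $X$ of nonempty subsets of $Y$ (whenever they exist). *)

From HB Require Import structures.
From mathcomp Require Import all_boot all_order all_algebra.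
From mathcomp Require Import all_classical topology.
Set Implicit Arguments. Unset Strict Implicit. Unset Printing Implicit Defensive.
Import GRing.Theory.
Local Open Scope classical_set_scope.
Local Open Scope ring_scope.

Definition prime_ideal (R : comPzRingType) (P : set R) : Prop :=
  [/\ P 0,
      (forall x y, P x -> P y -> P (x + y)),
      (forall x y, P y -> P (x * y)),
      ~ P 1
    & (forall x y, P (x * y) -> P x \/ P y)].

Definition spec (R : comPzRingType) : Type := {P : set R | prime_ideal P}.

Definition zariski_basic (R : comPzRingType) (f : R) : set (spec R) :=
  [set P | ~ (proj1_sig P) f].

Definition zariski_open (R : comPzRingType) (V : set (spec R)) : Prop :=
  forall P, V P -> exists f : R, zariski_basic f P /\ zariski_basic f `<=` V.

Definition spectral_space (X : topologicalType) : Prop :=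
  exists (R : comPzRingType) (h : X -> spec R),
    bijective h /\ (forall U : set X, open U <-> zariski_open (h @` U)).

Definition spec_le (X : topologicalType) (x y : X) : Prop :=
  closure [set x] y.

Definition spec_total (X : topologicalType) : Prop :=
  forall x y : X, spec_le x y \/ spec_le y x.

Definition is_sup (X : topologicalType) (S : set X) (s : X) : Prop :=
  (forall z, S z -> spec_le z s) /\
  (forall u, (forall z, S z -> spec_le z u) -> spec_le s u).

Definition is_inf (X : topologicalType) (S : set X) (s : X) : Prop :=
  (forall z, S z -> spec_le s z) /\
  (forall u, (forall z, S z -> spec_le u z) -> spec_le u s).

(* Y_oo : suprema in X of nonempty subsets of Y *)
Definition sups_of (X : topologicalType) (Y : set X) : set X :=
  [set s | exists S : set X, [/\ S `<=` Y, S !=set0 & is_sup S s]].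

(* Y_(oo) : infima in X of nonempty subsets of Y *)
Definition infs_of (X : topologicalType) (Y : set X) : set X :=
  [set s | exists S : set X, [/\ S `<=` Y, S !=set0 & is_inf S s]].

Definition cons_subbasic (X : topologicalType) (B : set X) : Prop :=
  exists U : set X, [/\ open U, compact U & (B = U \/ B = ~` U)].

(* open sets of the topology generated by this subbasis (the coarsest
   topology in which every open quasi-compact set is clopen): every
   point of W has a neighbourhood that is a finite intersection of
   subbasic sets contained in W. *)
Definition cons_open (X : topologicalType) (W : set X) : Prop :=
  forall x, W x -> exists Bs : seq (set X),
    (forall B, B \in Bs -> cons_subbasic B /\ B x) /\
    (fun y => forall B, B \in Bs -> B y) `<=` W.

Definition cons_closed (X : topologicalType) (C : set X) : Prop :=
  cons_open (~` C).

Definition cons_closure (X : topologicalType) (Y : set X) : set X :=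
  \bigcap_(C in [set C : set X | cons_closed C /\ Y `<=` C]) C.

From HB Require Import structures.
From mathcomp Require Import all_boot all_order all_algebra.
From mathcomp Require Import all_classical topology.
Local Open Scope classical_set_scope.
Set Implicit Arguments. Unset Strict Implicit.

(** Identify X with Spec R.  The specialization order becomes inclusion of
    prime ideals, so totality makes the points of X a chain of primes.  The
    union and the intersection of a chain of primes are prime; in particular
    the union of the ideals of the points of a basic open D(f) is a greatest
    point of D(f), which is therefore quasi-compact.

    If x is the supremum (infimum) of a nonempty S in Y, every constructible
    subbasic neighbourhood of x contains a final (initial) segment of S: for
    the complement of a compact open around a supremum this is compactness,
    for an open set around an infimum it is primality of the intersection of
    the ideals of S.  So x lies in the constructible closure of Y.
    Conversely, if x is neither such a supremum nor such an infimum, some f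
    in the ideal of x has D(f) containing every point of Y below x, and some
    g outside it has D(g) missing every point of Y above x; then V(f) /\ D(g)
    is a constructible neighbourhood of x that misses Y.  Part (2) follows
    because a set is constructibly closed iff it contains its constructible
    closure. *)

Section SpecializationOrder.
Variable X : topologicalType.
Implicit Types (x y z : X) (S U Y : set X).

Lemma spec_le_refl x : spec_le x x.
Proof. exact: subset_closure. Qed.

Lemma spec_le_trans x y z : spec_le x y -> spec_le y z -> spec_le x z.
Proof.
move=> xy yz; have yx : [set y] `<=` closure [set x] by move=> _ ->.
exact: closed_closure (closureS yx yz).
Qed.

Lemma open_spec_le U x y : open U -> spec_le x y -> U y -> U x.
Proof.
move=> oU xy Uy; have [_ [-> //]] := xy U (open_nbhs_nbhs (conj oU Uy)).
Qed.

Lemma compact_spec_greatest (A : set X) m :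
  A m -> (forall z, A z -> spec_le z m) -> compact A.
Proof.
move=> Am zm F PF FA; exists m; split => // B C FB.
rewrite nbhsE => -[V [oV Vm] VC].
have [w [Bw Aw]] := filter_ex (filterI FB FA).
by exists w; split => //; apply/VC/(open_spec_le oV (zm w Aw)).
Qed.

Definition spec_chain S := forall x y, S x -> S y -> spec_le x y \/ spec_le y x.

Definition up_tail S : set_system X :=
  filter_from S (fun s => S `&` [set t | spec_le s t]).

Definition down_tail S : set_system X :=
  filter_from S (fun s => S `&` [set t | spec_le t s]).

Lemma up_tail_proper S :
  S !=set0 -> spec_chain S -> ProperFilter (up_tail S).
Proof.
move=> S0 chS; apply: filter_from_proper => [|s Ss]; last first.
  by exists s; split => //; exact: spec_le_refl.
apply: filter_from_filter => // s t Ss St.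
by case: (chS s t Ss St) => st; [exists t|exists s] => // u [Su tu];
  do 2?split => //; exact: spec_le_trans tu.
Qed.

Lemma down_tail_proper S :
  S !=set0 -> spec_chain S -> ProperFilter (down_tail S).
Proof.
move=> S0 chS; apply: filter_from_proper => [|s Ss]; last first.
  by exists s; split => //; exact: spec_le_refl.
apply: filter_from_filter => // s t Ss St.
by case: (chS s t Ss St) => st; [exists s|exists t] => // u [Su us];
  do 2?split => //; exact: spec_le_trans st.
Qed.

Lemma up_tail_cluster_ub S p :
  cluster (up_tail S) p -> forall s, S s -> spec_le s p.
Proof.
move=> clp s Ss; rewrite clusterE in clp.
have tail_s : up_tail S (S `&` [set t | spec_le s t]) by exists s.
have sub : S `&` [set t | spec_le s t] `<=` closure [set s] by move=> t [].
exact: closed_closure (closureS sub (clp _ tail_s)).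
Qed.

Lemma sup_mem_compact_open S U x : spec_chain S -> open U -> compact U ->
  S !=set0 -> S `<=` U -> is_sup S x -> U x.
Proof.
move=> chS oU cU S0 SU [_ lub].
have [s0 Ss0] := S0.
have FU : up_tail S U by exists s0 => // t [/SU].
have [p [Up clp]] := cU _ (up_tail_proper S0 chS) FU.
exact: open_spec_le oU (lub p (up_tail_cluster_ub clp)) Up.
Qed.

Lemma sup_subbasic_up_tail S x B : spec_chain S -> S !=set0 -> is_sup S x ->
  cons_subbasic B -> B x -> up_tail S B.
Proof.
move=> chS S0 [ub lub] [U [oU cU [->|->]]] Bx.
  have [s0 Ss0] := S0.
  by exists s0 => // t [St _]; exact: open_spec_le oU (ub t St) Bx.
have [s1 Ss1 nUs1] : exists2 s1, S s1 & ~ U s1.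
  apply: contrapT => SU.
  apply/Bx/(sup_mem_compact_open chS oU cU S0 _ (conj ub lub)).
  by move=> s Ss; apply: contrapT => nUs; apply: SU; exists s.
by exists s1 => // t [_ s1t] Ut; exact: nUs1 (open_spec_le oU s1t Ut).
Qed.

Definition cons_basic_nbhd x (Bs : seq (set X)) :=
  forall B, B \in Bs -> cons_subbasic B /\ B x.

Definition seq_setI (Bs : seq (set X)) : set X :=
  [set y | forall B, B \in Bs -> B y].

Lemma cons_closureP Y x : cons_closure Y x <->
  forall Bs, cons_basic_nbhd x Bs -> Y `&` seq_setI Bs !=set0.
Proof.
split => [cx Bs xBs | meets C [cC YC]].
  apply: contrapT => nY; have : (~` seq_setI Bs) x.
    apply: cx; split => [/= z /contrapT Wz|y Yy Wy]; last by apply: nY; exists y.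
    exists Bs; split => [B BBs|y Wy /(_ Wy)//].
    by split; [exact: (xBs B BBs).1|exact: Wz].
  by apply => B /xBs[].
apply: contrapT => nCx; have [Bs [xBs sub]] := cC x nCx.
by have [y [Yy Wy]] := meets Bs xBs; exact: sub y Wy (YC y Yy).
Qed.

Lemma cons_closedP Y : cons_closed Y <-> cons_closure Y `<=` Y.
Proof.
split => [cY x|sub x nYx]; first by apply; split.
have /cons_closureP/existsNP[Bs /not_implyP[xBs nmeet]] : ~ cons_closure Y x.
  by move/sub.
by exists Bs; split => // y Wy Yy; apply: nmeet; exists y.
Qed.

Lemma cons_closure_filter Y x (F : set_system X) : ProperFilter F -> F Y ->
  (forall B, cons_subbasic B -> B x -> F B) -> cons_closure Y x.
Proof.
move=> PF FY FB; apply/cons_closureP => Bs xBs.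
suff : F (Y `&` seq_setI Bs) by exact: filter_ex.
elim: Bs xBs => [|B Bs IH] xBs.
  by apply: filterS FY => y Yy; split => // B; rewrite in_nil.
have [sB Bx] := xBs B (mem_head _ _).
have /IH FBs : cons_basic_nbhd x Bs.
  by move=> B' B'Bs; apply: xBs; rewrite inE B'Bs orbT.
apply: filterS (filterI (FB B sB Bx) FBs) => y [By [Yy Wy]]; split => // B'.
by rewrite inE => /orP[/eqP->|/Wy].
Qed.

Lemma sup_cons_closure Y S x : spec_chain S -> S `<=` Y -> S !=set0 ->
  is_sup S x -> cons_closure Y x.
Proof.
move=> chS SY S0 xS; apply: (cons_closure_filter (up_tail_proper S0 chS)).
  by have [s0 Ss0] := S0; exists s0 => // t [/SY].
by move=> B; exact: sup_subbasic_up_tail.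
Qed.

End SpecializationOrder.

Section ChainsOfPrimeIdeals.
Variables (R : comPzRingType) (T : Type) (A : set T) (P : T -> set R).
Hypotheses (A0 : A !=set0) (P_prime : forall i, A i -> prime_ideal (P i)).
Hypothesis P_chain : forall i j, A i -> A j -> P i `<=` P j \/ P j `<=` P i.

Lemma prime_ideal_bigcup : prime_ideal (\bigcup_(i in A) P i).
Proof.
have [i0 Ai0] := A0; split.
- by exists i0 => //; case: (P_prime Ai0).
- move=> a b [i Ai ai] [j Aj bj].
  have [k Ak [ak bk]] : exists2 k, A k & P k a /\ P k b.
    case: (P_chain Ai Aj) => [ij|ji]; [exists j|exists i] => //.
    + by split => //; exact: ij.
    + by split => //; exact: ji.
  by exists k => //; case: (P_prime Ak) => _ + _ _ _; apply.
- by move=> a b [i Ai bi]; exists i => //; case: (P_prime Ai) => _ _ + _ _; apply.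
- by move=> [i Ai]; case: (P_prime Ai).
- move=> a b [i Ai abi]; case: (P_prime Ai) => _ _ _ _ /(_ a b abi)[ai|bi].
  + by left; exists i.
  + by right; exists i.
Qed.

Lemma prime_ideal_bigcap : prime_ideal (\bigcap_(i in A) P i).
Proof.
have [i0 Ai0] := A0; split.
- by move=> i Ai; case: (P_prime Ai).
- move=> a b aP bP i Ai.
  by case: (P_prime Ai) => _ + _ _ _; apply; [exact: aP|exact: bP].
- by move=> a b bP i Ai; case: (P_prime Ai) => _ _ + _ _; apply; exact: bP.
- by move=> /(_ i0 Ai0); case: (P_prime Ai0).
- move=> a b abP.
  have [aP|/existsNP[i /not_implyP[Ai nai]]] := pselect ((\bigcap_(i in A) P i) a).
    by left.
  right => j Aj.
  have [_ _ _ _ prime_i] := P_prime Ai; have [_ _ _ _ prime_j] := P_prime Aj.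
  case: (P_chain Ai Aj) => [ij|ji].
  + by case: (prime_i a b (abP i Ai)) => // /ij.
  + by case: (prime_j a b (abP j Aj)) => // /ji.
Qed.

End ChainsOfPrimeIdeals.

Section TotallyOrderedSpectralSpace.
Variables (X : topologicalType) (R : comPzRingType).
Variables (h : X -> spec R) (g : spec R -> X).
Hypotheses (hK : cancel h g) (gK : cancel g h).
Hypothesis h_open : forall U : set X, open U <-> zariski_open (h @` U).

Definition ideal_of (x : X) : set R := proj1_sig (h x).

Definition basic_open (f : R) : set X := h @^-1` zariski_basic f.

Lemma ideal_of_prime x : prime_ideal (ideal_of x).
Proof. exact: proj2_sig. Qed.

Lemma ideal_of_surj (P : set R) : prime_ideal P -> exists x, ideal_of x = P.
Proof. by move=> Pprime; exists (g (exist _ P Pprime)); rewrite /ideal_of gK. Qed.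

Lemma open_basic f : open (basic_open f).
Proof.
apply/h_open => _ [x Dfx <-]; exists f; split => // Q DfQ.
by exists (g Q); rewrite /basic_open /ideal_of /= gK.
Qed.

Lemma basic_open_nbhs (U : set X) x : open U -> U x ->
  exists f, basic_open f x /\ basic_open f `<=` U.
Proof.
move=> /h_open oU Ux; have [f [Dfx DfU]] := oU (h x) (ex_intro2 _ _ x Ux erefl).
exists f; split => // y Dfy; have [z Uz /(can_inj hK) <-//] := DfU (h y) Dfy.
Qed.

Lemma spec_le_ideal_of x y : spec_le x y <-> ideal_of x `<=` ideal_of y.
Proof.
split => [xy r xr | xy B].
  by apply: contrapT => yr; apply: (open_spec_le (open_basic r) xy yr).
rewrite nbhsE => -[V [oV Vy] VB]; have [f [Dfy DfV]] := basic_open_nbhs oV Vy.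
by exists x; split => //; apply/VB/DfV => /xy.
Qed.

Lemma not_sup_basic_open (Y : set X) x : ~ sups_of Y x ->
  exists f, ~ basic_open f x /\ forall y, Y y -> spec_le y x -> basic_open f y.
Proof.
move=> nsup; apply: contrapT => nf; apply: nsup.
have cover f : ideal_of x f -> exists2 y, Y y /\ spec_le y x & ideal_of y f.
  move=> xf; apply: contrapT => ny; apply: nf; exists f.
  by split => [/(_ xf)//|y Yy yx yf]; apply: ny; exists y.
exists [set y | Y y /\ spec_le y x]; split => [y []//||].
  have x0 : ideal_of x 0%R by case: (ideal_of_prime x).
  by have [y Yy _] := cover 0%R x0; exists y.
split => [y []//|u ub]; apply/spec_le_ideal_of => r /cover[y Yy yr].
exact: (spec_le_ideal_of _ _).1 (ub y Yy) r yr.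
Qed.

Lemma not_inf_basic_open (Y : set X) x : ~ infs_of Y x ->
  exists f, basic_open f x /\ forall y, Y y -> spec_le x y -> ~ basic_open f y.
Proof.
move=> ninf; apply: contrapT => nf; apply: ninf.
have meet f : (forall y, Y y -> spec_le x y -> ideal_of y f) -> ideal_of x f.
  move=> Yf; apply: contrapT => xf; apply: nf; exists f.
  by split => // y Yy xy; apply; exact: Yf.
exists [set y | Y y /\ spec_le x y]; split => [y []//||].
  apply: contrapT => none; case: (ideal_of_prime x) => _ _ _ + _; apply.
  by apply: meet => y Yy xy; exfalso; apply: none; exists y.
split => [y []//|u lb]; apply/spec_le_ideal_of => r ur; apply: meet => y Yy xy.
exact: (spec_le_ideal_of _ _).1 (lb y (conj Yy xy)) r ur.
Qed.

Hypothesis htot : spec_total X.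

Lemma ideal_of_chain y z : ideal_of y `<=` ideal_of z \/ ideal_of z `<=` ideal_of y.
Proof. by case: (htot y z) => /spec_le_ideal_of; [left|right]. Qed.

Lemma compact_basic f : compact (basic_open f).
Proof.
move=> F PF FD; have D0 : basic_open f !=set0 by exact: filter_ex FD.
have [m Im] := ideal_of_surj (prime_ideal_bigcup D0 (fun y _ => ideal_of_prime y)
  (fun y z _ _ => ideal_of_chain y z)).
apply: (@compact_spec_greatest _ _ m) => // [|y Dfy].
  by rewrite -[basic_open f m]/(~ ideal_of m f) Im => -[y Dfy].
by apply/spec_le_ideal_of; rewrite Im => r; exists y.
Qed.

Lemma inf_open_meet (S U : set X) x : open U -> S !=set0 -> is_inf S x -> U x ->
  S `&` U !=set0.
Proof.
move=> oU S0 [_ glb] Ux; have [f [Dfx DfU]] := basic_open_nbhs oU Ux.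
apply: contrapT => nSU.
have Sf s : S s -> ideal_of s f.
  move=> Ss; apply: contrapT => Dfs; apply: nSU.
  by exists s; split => //; exact: DfU.
have [m Im] := ideal_of_surj (prime_ideal_bigcap S0 (fun s _ => ideal_of_prime s)
  (fun y z _ _ => ideal_of_chain y z)).
have /spec_le_ideal_of mx : spec_le m x.
  by apply: glb => s Ss; apply/spec_le_ideal_of; rewrite Im => r /(_ s Ss).
by apply/Dfx/mx; rewrite Im.
Qed.

Lemma inf_subbasic_down_tail (S : set X) x B : S !=set0 -> is_inf S x ->
  cons_subbasic B -> B x -> down_tail S B.
Proof.
move=> S0 [lb glb] [U [oU _ [->|->]]] Bx.
  have [s1 [Ss1 Us1]] := inf_open_meet oU S0 (conj lb glb) Bx.
  by exists s1 => // t [_ ts1]; exact: open_spec_le oU ts1 Us1.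
have [s0 Ss0] := S0.
by exists s0 => // t [St _] Ut; exact/Bx/(open_spec_le oU (lb t St)).
Qed.

Lemma inf_cons_closure (Y S : set X) x : spec_chain S -> S `<=` Y -> S !=set0 ->
  is_inf S x -> cons_closure Y x.
Proof.
move=> chS SY S0 xS; apply: (cons_closure_filter (down_tail_proper S0 chS)).
  by have [s0 Ss0] := S0; exists s0 => // t [/SY].
by move=> B; exact: inf_subbasic_down_tail.
Qed.

Lemma cons_closure_sub_sups_infs (Y : set X) x : cons_closure Y x ->
  (sups_of Y `|` infs_of Y) x.
Proof.
move=> cx; apply: contrapT => /not_orP[nsup ninf].
have [f [nDfx Yf]] := not_sup_basic_open nsup.
have [f' [Df'x Yf']] := not_inf_basic_open ninf.
have xBs : cons_basic_nbhd x [:: ~` basic_open f; basic_open f'].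
  move=> B; rewrite !inE => /orP[/eqP->|/eqP->]; split => //.
  - by exists (basic_open f); split; [exact: open_basic|exact: compact_basic|right].
  - by exists (basic_open f'); split; [exact: open_basic|exact: compact_basic|left].
have [y [Yy Wy]] := (cons_closureP _ _).1 cx _ xBs.
case: (htot y x) => [yx|xy].
- by apply: (Wy (~` basic_open f)); [rewrite mem_head|exact: Yf].
- by apply: (Yf' y Yy xy); apply: Wy; rewrite !inE eqxx orbT.
Qed.

End TotallyOrderedSpectralSpace.

Theorem proposition3p3 (X : topologicalType) (hX : spectral_space X)
  (htot : spec_total X) (Y : set X) :
  cons_closure Y = sups_of Y `|` infs_of Y /\
  (cons_closed Y <->
     (forall S : set X, S `<=` Y -> S !=set0 ->
        (forall s, is_sup S s -> Y s) /\ (forall s, is_inf S s -> Y s))).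
Proof.
have [R [h [[g hK gK] h_open]]] := hX.
have chain (S : set X) : spec_chain S by move=> x y _ _; exact: htot.
have closureE : cons_closure Y = sups_of Y `|` infs_of Y.
  apply/seteqP; split => x.
  - exact: (cons_closure_sub_sups_infs hK gK h_open htot).
  - case=> -[S [SY S0 xS]]; first exact: sup_cons_closure (chain S) SY S0 xS.
    exact: (inf_cons_closure hK gK h_open htot (chain S) SY S0 xS).
rewrite cons_closedP closureE; split => //; split.
- by move=> sub S SY S0; split => s xS; apply: sub; [left|right]; exists S.
- move=> closed x [] [S [SY S0 xS]].
  + exact: (closed S SY S0).1.
  + exact: (closed S SY S0).2.
Qed.
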